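(* The elements $H_k$, $k\in\mathbb Z$, generate the ring $\Lambda^{\pm}_m=\mathbb Z[x_1^{\pm1},\dots,x_m^{\pm1}]^{S_m}$.
   Context: For a sequence of integers $\lambda=(\lambda_1,\dots,\lambda_m)$, $E_\lambda$ is defined by $E_\lambda(x)\prod_{i<j}(x_i-x_j)=\sum_{\sigma\in S_m}\mathrm{sgn}(\sigma)\sigma(x_1^{\lambda_1+m-1}x_2^{\lambda_2+m-2}\cdots x_m^{\lambda_m})$, and $H_k=E_{(k,0,\dots,0)}$ for $k\in\mathbb Z$. *)

From HB Require Import structures.
From mathcomp Require Import all_boot all_order all_algebra all_fingroup.
From mathcomp Require Import mpoly.
Set Implicit Arguments. Unset Strict Implicit. Unset Printing Implicit Defensive.
Import Order.TTheory GRing.Theory Num.Theory.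
Local Open Scope ring_scope.

(* Ambient field: the fraction field Q(x_1..x_m) of Z[x_1..x_m]; the ring of
   Laurent polynomials Z[x_1^{+-1},..,x_m^{+-1}] is realized inside it.
   Variables are 0-indexed: x_i for i : 'I_m. *)
Definition Frac (m : nat) := {fraction {mpoly int[m]}}.

Definition xvar (m : nat) (i : 'I_m) : Frac m :=
  @FracField.tofrac {mpoly int[m]} 'X_i.

(* A Laurent polynomial given by a finite list of (coefficient, exponent vector),
   with the variables renamed by f (x_i |-> x_(f i)). *)
Definition lpoly_eval (m : nat) (s : seq (int * {ffun 'I_m -> int}))
    (f : 'I_m -> 'I_m) : Frac m :=
  \sum_(t <- s) t.1%:~R * \prod_(i < m) xvar (f i) ^ t.2 i.

Definition is_laurent (m : nat) (F : Frac m) : Prop :=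
  exists s, F = lpoly_eval s id.

(* Lambda^{+-}_m = Z[x^{+-1}]^{S_m}: Laurent polynomials fixed by every
   permutation of the variables (sigma acts by x_i |-> x_(sigma i); this is
   independent of the chosen representation). *)
Definition sym_laurent (m : nat) (F : Frac m) : Prop :=
  exists s, F = lpoly_eval s id /\
    forall sigma : 'S_m, lpoly_eval s (fun i => sigma i) = F.

Definition vandermonde (m : nat) : Frac m :=
  \prod_(i < m) \prod_(j < m | (i < j)%N) (xvar i - xvar j).

(* Antisymmetrization sum_sigma sgn(sigma) sigma(x_1^{l_1+m-1} ... x_m^{l_m}),
   with 0-indexed exponent l_i + (m-1-i). *)
Definition alt_lambda (m : nat) (lam : 'I_m -> int) : Frac m :=
  \sum_(sigma : 'S_m) (-1) ^+ (odd_perm sigma) *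
     \prod_(i < m) xvar (sigma i) ^ (lam i + (m.-1 - i)%N%:Z).

(* E_lambda = alt_lambda / Vandermonde (the Vandermonde is nonzero). *)
Definition E_lambda (m : nat) (lam : 'I_m -> int) : Frac m :=
  alt_lambda lam / vandermonde m.

Definition H (m : nat) (k : int) : Frac m :=
  E_lambda (fun i : 'I_m => if (i : nat) == 0%N then k else 0).

From HB Require Import structures.
From mathcomp Require Import all_boot all_order all_algebra all_fingroup.
From mathcomp Require Import mpoly zify boolp.
Set Implicit Arguments. Unset Strict Implicit. Unset Printing Implicit Defensive.
Import GRing.Theory.
Local Open Scope ring_scope.

(** Write [e_j] for the elementary symmetric polynomials and [m = n + 1].
   Expanding the alternant of [H_k] along its first row and using
   [sum_j (-1)^j e_j x^(N-j) = x^(N-m) prod_i (x - x_i) = 0] at [x = x_i]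
   gives the recurrence [sum_(j <= m) (-1)^j e_j H_(k-j) = 0], with initial
   values [H_0 = 1] and [H_(-1) = ... = H_(-n) = 0] (two equal rows).
   Since the leading coefficient [(-1)^m e_m] is a unit of
   [Lambda^(+-)_m], the recurrence can be run in both directions: the [H_k]
   lie in the ring generated by [e_1, ..., e_m, e_m^-1], and conversely the
   recurrence at [k = j] expresses [e_j] through [H_1, ..., H_j], while at
   [k = 0] it gives [e_m^-1 = (-1)^n H_(-m)]. Finally that ring is all of
   [Lambda^(+-)_m]: multiplying a symmetric Laurent polynomial by a large
   power of [e_m] yields a symmetric polynomial, a polynomial in the [e_j]. *)

Section LinearRecurrence.

Variables (R : fieldType) (S : subringClosed R) (n : nat).
Variables (c : nat -> R) (u : int -> R).
Hypothesis u_rec : forall k, \sum_(j < n.+2) c j * u (k - j%:Z) = 0.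
Hypothesis c0 : c 0 = 1.
Hypothesis u0 : u 0 = 1.
Hypothesis u_neg : forall j, (0 < j <= n)%N -> u (- j%:Z) = 0.

Lemma recurrence_lead : c n.+1 * u (- n.+1%:Z) = -1.
Proof.
have := u_rec 0; rewrite big_ord_recr big_ord_recl big1 => [|j _] /=.
  rewrite subr0 c0 u0 mulr1 addr0 sub0r => /eqP.
  by rewrite addrC addr_eq0 => /eqP.
by rewrite sub0r u_neg ?mulr0 //= ltn_ord.
Qed.

Lemma recurrence_lead_neq0 : c n.+1 != 0.
Proof.
by apply: contra_eq_neq recurrence_lead => ->; rewrite mul0r eq_sym oppr_eq0 oner_eq0.
Qed.

Lemma recurrence_coef_in : (forall k, u k \in S) -> forall j, (j <= n.+1)%N -> c j \in S.
Proof.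
move=> uS; elim/ltn_ind => -[_ _|j IH lt_j]; first by rewrite c0 rpred1.
have := u_rec j.+1; rewrite (bigD1 (@Ordinal n.+2 j.+1 lt_j)) //= subrr u0 mulr1 => /eqP.
rewrite addr_eq0 => /eqP ->; rewrite rpredN rpred_sum // => -[l lt_l].
rewrite -(inj_eq val_inj) /= => ne_lj.
have [lt_lj|ge_lj] := ltnP l j.+1; first by rewrite rpredM ?IH.
have -> : j.+1%:Z - l%:Z = - (l - j.+1)%N%:Z by lia.
by rewrite u_neg ?mulr0 ?rpred0 //; lia.
Qed.

Lemma recurrence_lead_inv_in : (forall k, u k \in S) -> (c n.+1)^-1 \in S.
Proof.
move=> uS; have -> : (c n.+1)^-1 = - u (- n.+1%:Z).
  apply: (mulfI recurrence_lead_neq0).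
  by rewrite divff ?recurrence_lead_neq0 // mulrN recurrence_lead opprK.
by rewrite rpredN.
Qed.

Lemma recurrence_in : (forall j, (j <= n.+1)%N -> c j \in S) -> (c n.+1)^-1 \in S ->
  forall k, u k \in S.
Proof.
move=> cS cinvS.
(* Windows of [n.+1] consecutive values propagate upwards because [c 0 = 1],
   and downwards because [(c n.+1)^-1] lies in [S]. *)
pose window k := forall i : 'I_n.+1, u (k - i%:Z) \in S.
have window0 : window 0.
  move=> [[|i] lt_i]; first by rewrite subr0 u0 rpred1.
  by rewrite sub0r u_neg ?rpred0.
have window_up k : window k -> window (k + 1).
  move=> wk [[|i] lt_i]; last first.
    have -> : k + 1 - i.+1%:Z = k - i%:Z by lia.
    exact: (wk (Ordinal (ltnW lt_i))).
  have := u_rec (k + 1); rewrite big_ord_recl /= c0 mul1r subr0 => /eqP.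
  rewrite addr_eq0 => /eqP ->; rewrite rpredN rpred_sum // => j _.
  have -> : k + 1 - (bump 0 j)%:Z = k - j%:Z by rewrite /bump; lia.
  by rewrite rpredM ?cS ?(wk j).
have window_down k : window k -> window (k - 1).
  move=> wk [i lt_i]; have [lt_in|le_ni] := ltnP i n.
    have -> : k - 1 - i%:Z = k - i.+1%:Z by lia.
    exact: (wk (@Ordinal n.+1 i.+1 lt_in)).
  have -> : k - 1 - i%:Z = k - n.+1%:Z by lia.
  have := u_rec k; rewrite big_ord_recr /= => /eqP; rewrite addrC addr_eq0 => /eqP Ek.
  rewrite -[u _](mulKf recurrence_lead_neq0) Ek rpredM // rpredN rpred_sum // => j _.
  by rewrite rpredM ?(wk j) // cS // ltnW.
have windowP k : window k.
  elim/int_rect: k => [|k|k]; first exact: window0.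
    by rewrite -addn1 PoszD; apply: window_up.
  by rewrite -addn1 PoszD opprD; apply: window_down.
by move=> k; have := windowP k ord0; rewrite subr0.
Qed.

End LinearRecurrence.

Local Notation tf := (@FracField.tofrac {mpoly int[_]}).

Lemma xvar_neq0 m (i : 'I_m) : xvar i != 0.
Proof.
rewrite tofrac_eq0; apply/eqP => /(congr1 (mcoeff U_(i))).
by rewrite mcoeffXU eqxx mcoeff0; apply/eqP; rewrite oner_eq0.
Qed.

Lemma xvar_inj m : injective (@xvar m).
Proof.
move=> i j /eqP; rewrite tofrac_eq => /eqP /(congr1 (mcoeff U_(i))).
by rewrite !mcoeffXU eqxx; case: eqP => // _ /eqP; rewrite eq_sym oner_eq0.
Qed.

Lemma vandermonde_neq0 m : vandermonde m != 0.
Proof.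
rewrite prodf_seq_neq0; apply/allP => i _; rewrite prodf_seq_neq0.
apply/allP => j _; apply/implyP => lt_ij; rewrite subr_eq0.
by apply/eqP => /xvar_inj/eqP; rewrite -(inj_eq val_inj) /= ltn_eqF.
Qed.

Definition esymF m j : Frac m := tf (mesym m int j).

Lemma esymF0 m : esymF m 0 = 1.
Proof. by rewrite /esymF mesym0E rmorph1. Qed.

Lemma esymF_top m : esymF m m = \prod_(i < m) xvar i.
Proof. by rewrite /esymF mesymnnE rmorph_prod. Qed.

Lemma esymF_top_neq0 m : esymF m m != 0.
Proof. by rewrite esymF_top prodf_seq_neq0; apply/allP => i _; rewrite xvar_neq0. Qed.

Lemma viete_xvar m (a : 'I_m) :
  \sum_(j < m.+1) (-1) ^+ j * esymF m j * xvar a ^+ (m - j) = 0.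
Proof.
have root_a : (map_poly tf (\prod_(i < m) ('X - ('X_i)%:P))).[xvar a] = 0.
  rewrite rmorph_prod horner_prod; apply/eqP/prodf_eq0; exists a => //.
  by rewrite /= map_polyXsubC hornerXsubC subrr.
rewrite Viete raddf_sum horner_sum in root_a; rewrite -[RHS]root_a.
apply: eq_bigr => j _ /=.
by rewrite scalerA map_polyZ hornerZ map_polyXn hornerXn rmorphM rmorphXn rmorphN1.
Qed.

Lemma viete_xvar_shift m (a : 'I_m) (N : int) :
  \sum_(j < m.+1) (-1) ^+ j * esymF m j * xvar a ^ (N - j%:Z) = 0.
Proof.
transitivity (xvar a ^ (N - m%:Z) *
  \sum_(j < m.+1) (-1) ^+ j * esymF m j * xvar a ^+ (m - j)).
  rewrite mulr_sumr; apply: eq_bigr => j _; have le_jm : (j <= m)%N by rewrite -ltnS.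
  have -> : N - j%:Z = (N - m%:Z) + (m - j)%N%:Z by rewrite -subzn // addrA subrK.
  by rewrite expfzDr ?xvar_neq0 // mulrCA.
by rewrite viete_xvar mulr0.
Qed.

Lemma alt_lambda_det m (lam : 'I_m -> int) :
  alt_lambda lam = \det (\matrix_(i, j) xvar j ^ (lam i + (m.-1 - i)%N%:Z)).
Proof.
rewrite /alt_lambda /determinant; apply: eq_bigr => s _; congr (_ * _).
by apply: eq_bigr => i _; rewrite mxE.
Qed.

Lemma alt_lambda_eq0 m (lam : 'I_m -> int) (i1 i2 : 'I_m) : i1 != i2 ->
  lam i1 + (m.-1 - i1)%N%:Z = lam i2 + (m.-1 - i2)%N%:Z -> alt_lambda lam = 0.
Proof.
move=> ne_i12 eq_exp; rewrite alt_lambda_det.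
by apply: (determinant_alternate ne_i12) => j; rewrite !mxE eq_exp.
Qed.

Lemma vandermonde_rev m : vandermonde m =
  \prod_(i < m) \prod_(j < m | (i < j)%N) (xvar (rev_ord j) - xvar (rev_ord i)).
Proof.
rewrite /vandermonde !pair_big_dep /=.
pose rev2 (p : 'I_m * 'I_m) := (rev_ord p.2, rev_ord p.1).
have rev2K : involutive rev2 by move=> [i j]; rewrite /rev2 !rev_ordK.
rewrite (reindex_inj (inv_inj rev2K)) /=; apply: eq_bigl => -[i j] /=.
by have := ltn_ord i; have := ltn_ord j; lia.
Qed.

Lemma alt_lambda_const0 m (lam : 'I_m -> int) : (forall i, lam i = 0) ->
  alt_lambda lam = vandermonde m.
Proof.
(* Reversing both the rows and the columns gives a Vandermonde matrix. *)
move=> lam0; pose r : 'S_m := perm (@rev_ord_inj m).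
pose V := @Vandermonde _ m m (\row_j xvar (rev_ord j)).
rewrite alt_lambda_det.
have -> : \matrix_(i, j) xvar j ^ (lam i + (m.-1 - i)%N%:Z) = row_perm r (col_perm r V).
  apply/matrixP => i j; rewrite !mxE !permE rev_ordK lam0 add0r.
  by case: m {lam lam0 r V} i j => [[]|n] i j //=; rewrite subSS.
rewrite row_permE col_permE !det_mulmx !det_perm odd_permV.
rewrite mulrCA -signr_addb addbb mulr1 det_Vandermonde vandermonde_rev.
by apply: eq_bigr => i _; apply: eq_bigr => j _; rewrite !mxE.
Qed.

Lemma H_zero m : H m 0 = 1.
Proof.
rewrite /H /E_lambda alt_lambda_const0 ?divff ?vandermonde_neq0 // => i.
by case: eqP.
Qed.

Lemma H_nvars0 k : H 0 k = 1.
Proof. by rewrite /H /E_lambda alt_lambda_const0 ?divff ?vandermonde_neq0 // => -[]. Qed.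

Lemma H_neg n j : (0 < j <= n)%N -> H n.+1 (- j%:Z) = 0.
Proof.
case/andP => j_gt0 le_jn; have lt_jn1 : (j < n.+1)%N by [].
rewrite /H /E_lambda (@alt_lambda_eq0 _ _ ord0 (Ordinal lt_jn1)) ?mul0r //.
  by rewrite -(inj_eq val_inj) /= eq_sym -lt0n.
by rewrite /= gtn_eqF // add0r subn0 addrC subzn.
Qed.

Definition esymF_signed n j : Frac n.+1 := (-1) ^+ j * esymF n.+1 j.

Lemma esymF_signed0 n : esymF_signed n 0 = 1.
Proof. by rewrite /esymF_signed mul1r esymF0. Qed.

Lemma H_recurrence n (k : int) :
  \sum_(j < n.+2) esymF_signed n j * H n.+1 (k - j%:Z) = 0.
Proof.
rewrite /esymF_signed.
pose lamH (N : int) (i : 'I_n.+1) := if (i : nat) == 0%N then N else 0.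
suff alt_rec :
    \sum_(j < n.+2) (-1) ^+ j * esymF n.+1 j * alt_lambda (lamH (k - j%:Z)) = 0.
  rewrite /H /E_lambda; under eq_bigr do rewrite mulrA.
  by rewrite -mulr_suml alt_rec mul0r.
under eq_bigr do rewrite mulr_sumr.
rewrite exchange_big big1 // => s _.
pose R := \prod_(i < n) xvar (s (lift ord0 i)) ^ (n - i.+1)%N%:Z.
have tail N : \prod_(i < n)
    xvar (s (lift ord0 i)) ^ (lamH N (lift ord0 i) + (n.+1.-1 - lift ord0 i)%N%:Z) = R.
  by apply: eq_bigr => i _; rewrite /lamH lift0 add0r.
transitivity ((-1) ^+ s * R * \sum_(j < n.+2)
    (-1) ^+ j * esymF n.+1 j * xvar (s ord0) ^ (k + n%:Z - j%:Z)).
  rewrite mulr_sumr; apply: eq_bigr => j _.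
  rewrite big_ord_recl tail /= subn0 addrAC.
  by rewrite mulrCA -[RHS]mulrA [R * _]mulrC !mulrA.
by rewrite viete_xvar_shift mulr0.
Qed.

Lemma tofrac_mpolyC m (c : int) : tf (c%:MP : {mpoly int[m]}) = c%:~R.
Proof. by rewrite -[c in c%:MP]intz !rmorph_int. Qed.

Lemma tofrac_msym_sum m I (r : seq I) (a : I -> int) (e : I -> 'X_{1..m})
    (sigma : 'S_m) :
  tf (msym sigma (\sum_(t <- r) a t *: 'X_[e t])) =
  \sum_(t <- r) (a t)%:~R * \prod_(i < m) xvar (sigma i) ^+ e t i.
Proof.
rewrite [msym _ _]raddf_sum rmorph_sum; apply: eq_bigr => t _ /=.
rewrite msymZ -mul_mpolyC rmorphM; congr (_ * _); first exact: tofrac_mpolyC.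
by rewrite /msym mmapX /mmap1 rmorph_prod; apply: eq_bigr => i _; rewrite rmorphXn.
Qed.

Section SymmetricLaurent.

Variable m : nat.
Local Notation lterm := (int * {ffun 'I_m -> int})%type.
Implicit Types (F G : Frac m) (s : seq lterm).

Lemma eq_lpoly_eval s (f g : 'I_m -> 'I_m) : f =1 g -> lpoly_eval s f = lpoly_eval s g.
Proof.
by move=> fg; apply: eq_bigr => t _; congr (_ * _); apply: eq_bigr => i _; rewrite fg.
Qed.

Lemma sym_laurent_perm F s :
  (forall sigma : 'S_m, lpoly_eval s (fun i => sigma i) = F) -> sym_laurent F.
Proof.
move=> sF; exists s; split=> //; rewrite -(sF 1%g).
by apply: eq_lpoly_eval => i; rewrite perm1.
Qed.

Lemma sym_laurent_op2 (op : Frac m -> Frac m -> Frac m) sop :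
  (forall s1 s2 f, lpoly_eval (sop s1 s2) f = op (lpoly_eval s1 f) (lpoly_eval s2 f)) ->
  forall F G, sym_laurent F -> sym_laurent G -> sym_laurent (op F G).
Proof.
move=> sopE F G [s1 [_ s1F]] [s2 [_ s2G]].
by apply: (@sym_laurent_perm _ (sop s1 s2)) => sigma; rewrite sopE s1F s2G.
Qed.

Definition lpoly_sub s1 s2 := s1 ++ [seq (- t.1, t.2) | t <- s2].

Definition lpoly_mul s1 s2 :=
  [seq (a.1 * b.1, [ffun i => a.2 i + b.2 i]) | a : lterm <- s1, b : lterm <- s2].

Lemma lpoly_eval_sub s1 s2 f :
  lpoly_eval (lpoly_sub s1 s2) f = lpoly_eval s1 f - lpoly_eval s2 f.
Proof.
rewrite /lpoly_eval /lpoly_sub big_cat big_map -sumrN; congr (_ + _).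
by apply: eq_bigr => t _; rewrite mulrNz mulNr.
Qed.

Lemma lpoly_eval_mul s1 s2 f :
  lpoly_eval (lpoly_mul s1 s2) f = lpoly_eval s1 f * lpoly_eval s2 f.
Proof.
rewrite /lpoly_eval /lpoly_mul big_allpairs_dep mulr_suml; apply: eq_bigr => a _.
rewrite mulr_sumr; apply: eq_bigr => b _ /=; rewrite intrM mulrACA -big_split.
by congr (_ * _); apply: eq_bigr => i _; rewrite ffunE expfzDr ?xvar_neq0.
Qed.

Lemma sym_laurent_monomial (c : int) (e : int) :
  sym_laurent (c%:~R * (\prod_(i < m) xvar i) ^ e).
Proof.
apply: (@sym_laurent_perm _ [:: (c, [ffun=> e])]) => sigma.
rewrite /lpoly_eval big_seq1 /=; congr (_ * _).
rewrite (eq_bigr (fun i => xvar (sigma i) ^ e)) => [|i _]; last by rewrite ffunE.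
rewrite (big_morph (fun x => x ^ e) (fun x y => expfzMl x y e) (exp1rz _ e)).
by rewrite [RHS](reindex_inj (@perm_inj _ sigma)).
Qed.

(* Excluded middle turns [sym_laurent] into a boolean predicate, so that
   [Lambda^(+-)_m] can carry a [subringClosed] structure. *)
Definition sym_laurents : {pred Frac m} := fun F => `[< sym_laurent F >].

Lemma sym_laurentsP F : reflect (sym_laurent F) (F \in sym_laurents).
Proof. exact: asboolP. Qed.

Lemma sym_laurents_subring_closed : subring_closed sym_laurents.
Proof.
split.
- by apply/sym_laurentsP; have := sym_laurent_monomial 1 0; rewrite expr0z mulr1.
- move=> F G /sym_laurentsP symF /sym_laurentsP symG; apply/sym_laurentsP.
  exact: (@sym_laurent_op2 (fun F G => F - G) _ lpoly_eval_sub).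
- move=> F G /sym_laurentsP symF /sym_laurentsP symG; apply/sym_laurentsP.
  exact: (@sym_laurent_op2 *%R _ lpoly_eval_mul).
Qed.

End SymmetricLaurent.

HB.instance Definition _ m :=
  GRing.isSubringClosed.Build (Frac m) (@sym_laurents m) (@sym_laurents_subring_closed m).

Lemma sym_laurent_tofrac m (P : {mpoly int[m]}) : P \is symmetric -> sym_laurent (tf P).
Proof.
move=> /issymP Psym.
apply: (@sym_laurent_perm _ _ [seq (P@_mn, [ffun i => (mn i)%:Z]) | mn <- msupp P]).
move=> sigma; transitivity (tf (msym sigma P)); last by rewrite Psym.
rewrite [X in msym _ X]mpolyE tofrac_msym_sum /lpoly_eval big_map.
apply: eq_bigr => mn _ /=; congr (_ * _).
by apply: eq_bigr => i _; rewrite ffunE.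
Qed.

Lemma sym_laurent_esymF m j : sym_laurent (esymF m j).
Proof. exact/sym_laurent_tofrac/mesym_sym. Qed.

Lemma sym_laurent_esymF_top_inv m : sym_laurent (esymF m m)^-1.
Proof.
by have := @sym_laurent_monomial m 1 (-1); rewrite mulr1z exprN1 -esymF_top mul1r.
Qed.

Lemma sym_laurent_denominator m (F : Frac m) : sym_laurent F ->
  exists N (P : {mpoly int[m]}), P \is symmetric /\ tf P = F * esymF m m ^+ N.
Proof.
move=> [s [_ sF]].
pose N := (\sum_(t <- s) \sum_(i < m) `|t.2 i|)%N.
have N_ge t i : t \in s -> 0 <= t.2 i + N%:Z.
  move=> ts; suff : (`|t.2 i| <= N)%N by lia.
  by rewrite /N (big_rem t) //= (bigD1 i) //= -addnA leq_addr.
pose P := \sum_(t <- s) t.1 *: 'X_[[multinom absz (t.2 i + N%:Z)%R | i < m]].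
have tfP sigma : tf (msym sigma P) = F * esymF m m ^+ N.
  rewrite tofrac_msym_sum -(sF sigma) esymF_top -prodrXl.
  rewrite (reindex_inj (@perm_inj _ sigma)) /= mulr_suml big_seq [RHS]big_seq.
  apply: eq_bigr => t ts; rewrite -mulrA -big_split; congr (_ * _).
  apply: eq_bigr => i _ /=; rewrite mnmE.
  rewrite -[_ ^+ _]/(xvar (sigma i) ^ (absz (t.2 i + N%:Z))%:Z).
  by rewrite gez0_abs ?N_ge // expfzDr ?xvar_neq0.
exists N, P; split; last by rewrite -(msym1m P) tfP.
apply/issymP => sigma; apply/eqP; rewrite -tofrac_eq; apply/eqP.
by rewrite tfP -(msym1m P) tfP.
Qed.

Lemma tofrac_sym_in_subring m (S : subringClosed (Frac m)) (P : {mpoly int[m]}) :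
  (forall j, (j <= m)%N -> esymF m j \in S) -> P \is symmetric -> tf P \in S.
Proof.
move=> eS /sym_fundamental [t [<- _]].
rewrite comp_mpolyE rmorph_sum rpred_sum // => mn _.
rewrite -mul_mpolyC rmorphM /= tofrac_mpolyC rpredM ?rpred_int //.
rewrite rmorph_prod rpred_prod // => i _; rewrite rmorphXn rpredX // tnth_mktuple.
exact: (eS i.+1 (ltn_ord i)).
Qed.

Lemma sym_laurent_in_subring m (S : subringClosed (Frac m)) (F : Frac m) :
  (forall j, (j <= m)%N -> esymF m j \in S) -> (esymF m m)^-1 \in S ->
  sym_laurent F -> F \in S.
Proof.
move=> eS einvS /sym_laurent_denominator [N [P [Psym tfP]]].
have -> : F = tf P * (esymF m m)^-1 ^+ N.
  by rewrite tfP exprVn mulfK // expf_neq0 // esymF_top_neq0.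
by rewrite rpredM ?rpredX ?(tofrac_sym_in_subring eS).
Qed.

Lemma H_in_subring m (S : subringClosed (Frac m)) :
  (forall j, (j <= m)%N -> esymF m j \in S) -> (esymF m m)^-1 \in S ->
  forall k, H m k \in S.
Proof.
case: m S => [|n] S eS einvS k; first by rewrite H_nvars0 rpred1.
apply: (recurrence_in (@H_recurrence n) (esymF_signed0 n) (H_zero _) (@H_neg n)).
  by move=> j le_j; rewrite rpredM ?rpredX ?rpredN ?rpred1 ?eS.
by rewrite invr_signM rpredM ?rpredX ?rpredN ?rpred1.
Qed.

Lemma esymF_in_subring m (S : subringClosed (Frac m)) :
  (forall k, H m k \in S) -> forall j, (j <= m)%N -> esymF m j \in S.
Proof.
case: m S => [|n] S HS j le_j.
  by move: le_j; rewrite leqn0 => /eqP ->; rewrite esymF0 rpred1.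
rewrite -[esymF _ _](signrMK j) rpredM ?rpredX ?rpredN ?rpred1 //.
exact: (recurrence_coef_in (@H_recurrence n) (esymF_signed0 n) (H_zero _) (@H_neg n)).
Qed.

Lemma esymF_top_inv_in_subring m (S : subringClosed (Frac m)) :
  (forall k, H m k \in S) -> (esymF m m)^-1 \in S.
Proof.
case: m S => [|n] S HS; first by rewrite esymF0 invr1 rpred1.
rewrite -[_^-1](signrMK n.+1) -invr_signM rpredM ?rpredX ?rpredN ?rpred1 //.
exact: (recurrence_lead_inv_in (@H_recurrence n) (esymF_signed0 n) (H_zero _) (@H_neg n)).
Qed.

Theorem mainTheorem4 (m : nat) :
  (forall k : int, sym_laurent (H m k)) /\
  (forall F : Frac m, sym_laurent F ->
     forall S : {pred Frac m}, subring_closed S ->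
       (forall k : int, H m k \in S) -> F \in S).
Proof.
split=> [k | F symF S S_subring HS].
  apply/sym_laurentsP/H_in_subring => [j _|]; apply/sym_laurentsP.
    exact: sym_laurent_esymF.
  exact: sym_laurent_esymF_top_inv.
pose T : subringClosed (Frac m) := HB.pack S (GRing.isSubringClosed.Build _ S S_subring).
have HT k : H m k \in T := HS k.
exact: (sym_laurent_in_subring (esymF_in_subring HT) (esymF_top_inv_in_subring HT) symF).
Qed.
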